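(* Let $\alpha\in\mathbb R$, $\gamma\in\mathbb R\setminus\{0\}$, and let $K_0$ be the operator on $\ell^2(\mathbb Z)$ given by $(K_0f)(n)=\alpha f(n-1)+\alpha f(n+1)+\gamma n f(n)$. Let $\delta_n$ be the standard basis vector at $n$. Then for all $t\in\mathbb R$ and $x,n\in\mathbb Z$, $$\big[e^{-iK_0t}\delta_n\big](x)=J_{n-x}\!\Big(\tfrac{4\alpha}{\gamma}\sin\big(\tfrac{\gamma t}{2}\big)\Big)\exp\Big[-i\Big(\tfrac{\gamma t-\pi}{2}\,x+\tfrac{\gamma t+\pi}{2}\,n\Big)\Big],$$ where $J_k$ is the Bessel function of the first kind of integer order $k$.
   Context: $K_0$ is self-adjoint on the domain $\{f\in\ell^2(\mathbb Z):(nf(n))_n\in\ell^2(\mathbb Z)\}$. In the paper, $K_0$ is the infinite-volume matrix of $P(0)VP(0)$ for a uniform field $\vec B$ in the ground-state basis $|n,U\rangle$. Here $\alpha=\sqrt{B_1^2+B_2^2}\,a$, with $a$ the constant from the magnetization-profile lemma, and $\gamma=B_3$. *)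

From Stdlib Require Import Reals ZArith.
From Coquelicot Require Import Coquelicot.
Open Scope R_scope.

Definition seqZ := Z -> C.

Definition summableZ (g : Z -> R) : Prop :=
  ex_series (fun k : nat => g (Z.of_nat k)) /\
  ex_series (fun k : nat => g (- Z.of_nat (S k))%Z).
Definition sumZ (g : Z -> R) : R :=
  Series (fun k : nat => g (Z.of_nat k)) +
  Series (fun k : nat => g (- Z.of_nat (S k))%Z).

Definition l2 (f : seqZ) : Prop := summableZ (fun n => (Cmod (f n))^2).
Definition l2norm (f : seqZ) : R := sqrt (sumZ (fun n => (Cmod (f n))^2)).

Definition sadd (f g : seqZ) : seqZ := fun n => Cplus (f n) (g n).
Definition ssub (f g : seqZ) : seqZ := fun n => Cminus (f n) (g n).
Definition sscal (a : C) (f : seqZ) : seqZ := fun n => Cmult a (f n).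

Definition delta (n : Z) : seqZ :=
  fun x => if Z.eq_dec x n then RtoC 1 else RtoC 0.

(* The operator K_0 (as a formal difference operator on C^Z) and its
   self-adjointness domain {f in l^2 : (n f(n))_n in l^2}. *)
Definition K0 (alpha gamma : R) (f : seqZ) : seqZ :=
  fun n => Cplus (Cplus (Cmult (RtoC alpha) (f (n - 1)%Z))
                        (Cmult (RtoC alpha) (f (n + 1)%Z)))
                 (Cmult (RtoC (gamma * IZR n)) (f n)).
Definition domK0 (f : seqZ) : Prop :=
  l2 f /\ l2 (fun n => Cmult (RtoC (IZR n)) (f n)).

(* U is a strongly continuous one-parameter unitary group on l^2(Z). *)
Definition unitary_group (U : R -> seqZ -> seqZ) : Prop :=
  (forall t f, l2 f -> l2 (U t f)) /\
  (forall t a b f g, l2 f -> l2 g ->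
      U t (sadd (sscal a f) (sscal b g)) = sadd (sscal a (U t f)) (sscal b (U t g))) /\
  (forall t f, l2 f -> l2norm (U t f) = l2norm f) /\
  (forall t g, l2 g -> exists f, l2 f /\ U t f = g) /\
  (forall f, l2 f -> U 0 f = f) /\
  (forall s t f, l2 f -> U (s + t) f = U s (U t f)) /\
  (forall t f, l2 f -> is_lim (fun s => l2norm (ssub (U s f) (U t f))) t 0).

(* U(t) = e^{-i A t} where the self-adjoint generator A is exactly K_0 with
   domain domK0:  f is in the generator's domain iff the strong derivative
   lim_{h->0} (U h f - f)/h exists in l^2, and then it equals -i K_0 f. *)
Definition generated_by_K0 (alpha gamma : R) (U : R -> seqZ -> seqZ) : Prop :=
  forall f g, l2 f -> l2 g ->
    (is_lim (fun h => l2norm (ssub (sscal (RtoC (/ h)) (ssub (U h f) f)) g)) 0 0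
     <-> (domK0 f /\ g = sscal (Cmult Ci (RtoC (-1))) (K0 alpha gamma f))).

Definition besselJnat (m : nat) (x : R) : R :=
  Series (fun j : nat => (-1)^j / (INR (fact j) * INR (fact (j + m)))
                          * (x / 2) ^ (2 * j + m)).
Definition besselJ (k : Z) (x : R) : R :=
  if Z_le_dec 0 k then besselJnat (Z.to_nat k) x
  else (-1) ^ (Z.to_nat (- k)) * besselJnat (Z.to_nat (- k)) x.

Definition expmi (theta : R) : C := (cos theta, - sin theta).

From Stdlib Require Import Reals ZArith Lia Lra FunctionalExtensionality ssreflect.
From Coquelicot Require Import Coquelicot.
Open Scope R_scope.

(* Both sides, as functions of [(x, t)], are bounded solutions of the lattice
   Schrödinger equation [u' = -i K0 u] with initial datum [delta n].  For the
   matrix coefficients of [U] this is the generator hypothesis: [delta n] lies in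
   the domain of [K0], and [U t] commutes with the generator.  For the Bessel wave
   it follows from [J_k' = (J_{k-1} - J_{k+1}) / 2] and the recurrence
   [z (J_{k-1} + J_{k+1}) = 2 k J_k].  Bounded solutions are unique: after the
   gauge transformation by [e^{i gamma x t}], which removes the diagonal part of
   [K0], a bounded solution [w] vanishing at [t = 0] satisfies
   [|w'| <= 2 |alpha| sup |w|], and iterating this Picard-style gives
   [|w(x, t)| <= B (4 |alpha| |t|)^k / k!] for every [k]. *)

Lemma INR_fact_S n : INR (fact (S n)) = INR (S n) * INR (fact n).
Proof. by rewrite fact_simpl mult_INR. Qed.

Lemma Series_nonneg (a : nat -> R) : (forall n, 0 <= a n) -> ex_series a -> 0 <= Series a.
Proof.
  move=> Ha Hex.
  have <- : Series (fun _ => 0) = 0.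
  { rewrite (Series_ext _ (fun n => 0 * 0)) ?Series_scal_l; [ring | move=> _; ring]. }
  by apply: Series_le => // n; split; [lra|].
Qed.

Lemma Series_ge_term (a : nat -> R) k :
  (forall n, 0 <= a n) -> ex_series a -> a k <= Series a.
Proof.
  move=> Ha Hex; rewrite (Series_incr_n a (S k)) //; last by lia.
  have : 0 <= Series (fun j => a (S k + j)%nat) by apply: Series_nonneg => //; exact/(ex_series_incr_n a).
  case: k => [|k] /=; first lra.
  have := cond_pos_sum a k Ha; lra.
Qed.

Lemma is_series_exp x : is_series (fun n => x ^ n / INR (fact n)) (exp x).
Proof.
  apply: (is_series_ext _ _ _ _ (is_exp_Reals x)) => n.
  by rewrite /scal /= /mult /= pow_n_pow.
Qed.

Lemma pow_div_fact_le_exp x m : 0 <= x -> x ^ m / INR (fact m) <= exp x.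
Proof.
  move=> Hx; rewrite -(is_series_unique _ _ (is_series_exp x)).
  apply: Series_ge_term; last by eexists; apply: is_series_exp.
  move=> n; apply: Rdiv_le_0_compat; [exact: pow_le | exact: INR_fact_lt_0].
Qed.

Lemma le_0_of_le_pow_div_fact D A r :
  (forall k, D <= A * (r ^ k / INR (fact k))) -> D <= 0.
Proof.
  move=> HD.
  have Hlim : is_lim_seq (fun k => A * (r ^ k / INR (fact k))) (Rbar_mult A 0).
  { apply/is_lim_seq_scal_l/ex_series_lim_0; eexists; exact: is_series_exp. }
  have := is_lim_seq_le _ _ _ _ HD (is_lim_seq_const D) Hlim.
  by rewrite /= Rmult_0_r.
Qed.

Lemma is_derive_eq (f : R -> R) x l l' : is_derive f x l -> l = l' -> is_derive f x l'.
Proof. by move=> H <-. Qed.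

(* Mean value theorem for [f s - K s^(k+1)/(k+1)]. *)
Lemma le_of_is_derive_le_pow (f f' : R -> R) K k :
  (forall s : R, is_derive f s (f' s)) -> f 0 = 0 -> (forall s, 0 <= s -> f' s <= K * s ^ k) ->
  forall t, 0 <= t -> f t <= K * t ^ S k / INR (S k).
Proof.
  move=> Hf Hf0 Hb t Ht.
  have Hk : 0 < INR (S k) by apply: lt_0_INR; lia.
  set g := fun s => f s - K * s ^ S k / INR (S k).
  have Hg s : is_derive g s (f' s - K * s ^ k).
  { rewrite /g; auto_derive; first by exists (f' s).
    rewrite (is_derive_unique _ _ _ (Hf s)).
    change (match k with 0%nat => 1 | S _ => INR k + 1 end) with (INR (S k)); field; lra. }
  have Hgc s : continuity_pt g s.
  { by apply: derivable_continuous_pt; exists (f' s - K * s ^ k); apply/is_derive_Reals. }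
  case: (Req_dec t 0) => [-> | Ht0].
  { rewrite Hf0 pow_i; last by lia.
    by apply: Req_le; field; lra. }
  have [c [Hc Hmvt]] := MVT_gen g 0 t _ (fun s _ => Hg s) (fun s _ => Hgc s).
  rewrite Rmin_left ?Rmax_right in Hc; try lra.
  have := Hb c (proj1 Hc).
  move: Hmvt; rewrite /g Hf0 pow_i; last by lia.
  have -> : 0 - K * 0 / INR (S k) = 0 by field; lra.
  move=> Heq Hc'; have : (f' c - K * c ^ k) * (t - 0) <= 0 by apply: Rmult_le_0_r; lra.
  lra.
Qed.

Lemma Rabs_le_of_is_derive_le_pow (f f' : R -> R) K k :
  (forall s : R, is_derive f s (f' s)) -> f 0 = 0 -> (forall s, Rabs (f' s) <= K * Rabs s ^ k) ->
  forall t, Rabs (f t) <= K * Rabs t ^ S k / INR (S k).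
Proof.
  suff Hpos : forall f f' : R -> R,
      (forall s : R, is_derive f s (f' s)) -> f 0 = 0 -> (forall s, Rabs (f' s) <= K * Rabs s ^ k) ->
      forall t, 0 <= t -> Rabs (f t) <= K * Rabs t ^ S k / INR (S k).
  { move=> Hf Hf0 Hb t; case: (Rle_dec 0 t) => Ht; first exact: Hpos.
    rewrite -(Ropp_involutive t) Rabs_Ropp.
    apply: (Hpos (fun s => f (- s)) (fun s => - f' (- s))); rewrite ?Ropp_0 //; last lra.
    - move=> s; apply: (is_derive_eq _ _ _ _ (is_derive_comp f Ropp s _ _ (Hf _) (is_derive_opp _ _ _ (is_derive_id s)))).
      rewrite /scal /= /mult /= /opp /one /=; ring.
    - by move=> s; rewrite Rabs_Ropp -(Rabs_Ropp s); apply: (Hb (- s)). }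
  move=> {}f {}f' Hf Hf0 Hb t Ht; rewrite (Rabs_right t); last lra.
  have Hb' s : 0 <= s -> Rabs (f' s) <= K * s ^ k.
  { by move=> Hs; have := Hb s; rewrite (Rabs_right s) //; lra. }
  apply/Rabs_le; split.
  - suff : - f t <= K * t ^ S k / INR (S k) by lra.
    apply: (le_of_is_derive_le_pow (fun s => - f s) (fun s => - f' s)) => //.
    + by move=> s; apply: (is_derive_opp f).
    + by rewrite Hf0 Ropp_0.
    + by move=> s /Hb' /Rabs_le_between; lra.
  - apply: (le_of_is_derive_le_pow f f') => // s /Hb' /Rabs_le_between; lra.
Qed.

Lemma is_derive_of_quotient_le (f : R -> R) (t l : R) (e : R -> R) :
  is_lim e 0 0 -> (forall h, h <> 0 -> Rabs ((f (t + h) - f t) / h - l) <= e h) -> is_derive f t l.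
Proof.
  move=> /is_lim_spec He Hq; apply/is_derive_Reals => eps Heps.
  have [d Hd] := He (mkposreal eps Heps); exists d => h Hh0 Hhd.
  apply: Rle_lt_trans (Hq h Hh0) _.
  have := Hd h _ Hh0; rewrite /= Rminus_0_r => H.
  have : Rabs (e h) < eps by apply: H; rewrite /ball /= /AbsRing_ball /abs /minus /plus /opp /= Ropp_0 Rplus_0_r.
  by move/Rabs_def2 => [].
Qed.

Lemma Z_nat_or_neg (k : Z) : (exists m, k = Z.of_nat m) \/ (exists m, k = (- Z.of_nat (S m))%Z).
Proof.
  case: (Z_le_dec 0 k) => ?; [left; exists (Z.to_nat k) | right; exists (Z.to_nat (- k - 1))]; lia.
Qed.

(** * Bessel functions of integer order *)

Definition bessel_coef (m j : nat) : R :=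
  (-1) ^ j / (INR (fact j) * INR (fact (j + m))).

Definition bessel_series (m : nat) (y : R) : R := PSeries (bessel_coef m) y.

Lemma besselJnat_series m z : besselJnat m z = (z / 2) ^ m * bessel_series m ((z / 2) ^ 2).
Proof.
  rewrite /besselJnat /bessel_series /PSeries -Series_scal_l.
  apply: Series_ext => j; rewrite /bessel_coef pow_add pow_mult; ring.
Qed.

Lemma bessel_coef_neq0 m j : bessel_coef m j <> 0.
Proof.
  apply: Rmult_integral_contrapositive_currified; first by apply: pow_nonzero; lra.
  apply/Rinv_neq_0_compat/Rmult_integral_contrapositive_currified; exact: INR_fact_neq_0.
Qed.

Lemma bessel_coef_S m j :
  bessel_coef m (S j) = - bessel_coef m j / (INR (S j) * INR (S (j + m))).
Proof.
  rewrite /bessel_coef plus_Sn_m !INR_fact_S -tech_pow_Rmult.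
  have := INR_fact_lt_0 j; have := INR_fact_lt_0 (j + m).
  have : 0 < INR (S j) by apply: lt_0_INR; lia.
  have : 0 < INR (S (j + m)) by apply: lt_0_INR; lia.
  move=> *; field; repeat split; lra.
Qed.

Lemma bessel_coef_S_order m j : bessel_coef (S m) j = bessel_coef m j / INR (S (j + m)).
Proof.
  rewrite /bessel_coef -plus_n_Sm INR_fact_S.
  have := INR_fact_lt_0 j; have := INR_fact_lt_0 (j + m).
  have : 0 < INR (S (j + m)) by apply: lt_0_INR; lia.
  move=> *; field; repeat split; lra.
Qed.

Lemma CV_radius_bessel_coef m : CV_radius (bessel_coef m) = p_infty.
Proof.
  apply: CV_radius_infinite_DAlembert; first exact: bessel_coef_neq0.
  have lim_inv : is_lim_seq (fun n => / INR (S n)) 0.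
  { apply/(is_lim_seq_incr_1 (fun n => / INR n)).
    rewrite -[Finite 0]/(Rbar_inv p_infty).
    by apply: is_lim_seq_inv; [apply: is_lim_seq_INR|]. }
  apply: (is_lim_seq_le_le (fun _ => 0) _ (fun n => / INR (S n))) => [n||//].
  2: exact: is_lim_seq_const.
  have HSn : 0 < INR (S n) by apply: lt_0_INR; lia.
  have HSnm : 1 <= INR (S (n + m)) by apply: (le_INR 1); lia.
  rewrite bessel_coef_S.
  have -> : - bessel_coef m n / (INR (S n) * INR (S (n + m))) / bessel_coef m n
          = - (/ INR (S n) * / INR (S (n + m))).
  { by field; repeat split; try lra; apply: bessel_coef_neq0. }
  rewrite Rabs_Ropp Rabs_right; last by apply/Rle_ge/Rmult_le_pos; apply/Rlt_le/Rinv_0_lt_compat; lra.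
  have Hinv : / INR (S (n + m)) <= 1 by rewrite -Rinv_1; apply: Rinv_le_contravar; lra.
  have : 0 < / INR (S n) by apply: Rinv_0_lt_compat.
  have : 0 < / INR (S (n + m)) by apply: Rinv_0_lt_compat; lra.
  nra.
Qed.

Lemma ex_pseries_bessel_coef m y : ex_pseries (bessel_coef m) y.
Proof. by apply: CV_radius_inside; rewrite CV_radius_bessel_coef. Qed.

Lemma is_derive_bessel_series m (y : R) :
  is_derive (bessel_series m) y (- bessel_series (S m) y).
Proof.
  have -> : - bessel_series (S m) y = PSeries (PS_derive (bessel_coef m)) y.
  { rewrite /bessel_series -PSeries_opp; apply: PSeries_ext => j.
    rewrite /PS_derive /PS_opp /opp bessel_coef_S bessel_coef_S_order; cbn -[INR].
    have : 0 < INR (S j) by apply: lt_0_INR; lia.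
    have : 0 < INR (S (j + m)) by apply: lt_0_INR; lia.
    move=> *; field; lra. }
  by apply: is_derive_PSeries; rewrite CV_radius_bessel_coef.
Qed.

Lemma bessel_series_rec p y :
  bessel_series p y + y * bessel_series (S (S p)) y = INR (S p) * bessel_series (S p) y.
Proof.
  rewrite /bessel_series -PSeries_incr_1 -PSeries_plus -?PSeries_scal;
    try apply: ex_pseries_incr_1; try apply: ex_pseries_bessel_coef.
  apply: PSeries_ext => -[|i];
    rewrite /PS_plus /PS_scal /PS_incr_1 /bessel_coef /plus /scal /zero /mult;
    cbn -[fact INR pow].
  - have := INR_fact_lt_0 p; have : 0 < INR (S p) by apply: lt_0_INR; lia.
    have := INR_fact_lt_0 0; rewrite INR_fact_S; move=> *; field; lra.
  - rewrite -!plus_n_Sm !INR_fact_S !S_INR plus_INR -tech_pow_Rmult.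
    have := INR_fact_lt_0 i; have := INR_fact_lt_0 (i + p).
    have := pos_INR i; have := pos_INR p.
    move=> *; field; repeat split; lra.
Qed.

Lemma is_derive_besselJnat m (z : R) :
  is_derive (besselJnat m) z
    (INR m / 2 * (z / 2) ^ pred m * bessel_series m ((z / 2) ^ 2) - besselJnat (S m) z).
Proof.
  apply: (is_derive_ext (fun z => (z / 2) ^ m * bessel_series m ((z / 2) ^ 2))).
  { by move=> s; rewrite besselJnat_series. }
  have Hhalf s : is_derive (fun s => s / 2) s (1 / 2) by auto_derive.
  have Hpow := is_derive_pow (fun s => s / 2) m z _ (Hhalf z).
  have Hsq := is_derive_comp (bessel_series m) (fun s => (s / 2) ^ 2) z _ _
    (is_derive_bessel_series m _) (is_derive_pow (fun s => s / 2) 2 z _ (Hhalf z)).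
  apply: (is_derive_eq _ _ _ _ (is_derive_mult _ _ z _ _ Hpow Hsq Rmult_comm)).
  rewrite (besselJnat_series (S m)) /plus /mult /scal /= /mult /=; field.
Qed.

Lemma is_derive_besselJnat_0 (z : R) : is_derive (besselJnat 0) z (- besselJnat 1 z).
Proof. by apply: (is_derive_eq _ _ _ _ (is_derive_besselJnat 0 z)) => /=; field. Qed.

Lemma is_derive_besselJnat_S p (z : R) :
  is_derive (besselJnat (S p)) z ((besselJnat p z - besselJnat (S (S p)) z) / 2).
Proof.
  apply: (is_derive_eq _ _ _ _ (is_derive_besselJnat (S p) z)).
  rewrite [pred _]/= !besselJnat_series.
  have -> : INR (S p) / 2 * (z / 2) ^ p * bessel_series (S p) ((z / 2) ^ 2)
          = (z / 2) ^ p / 2 * (INR (S p) * bessel_series (S p) ((z / 2) ^ 2)) by field.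
  rewrite -bessel_series_rec /=; field.
Qed.

Lemma besselJnat_rec p z :
  z * (besselJnat p z + besselJnat (S (S p)) z) = 2 * INR (S p) * besselJnat (S p) z.
Proof.
  rewrite !besselJnat_series.
  have -> : 2 * INR (S p) * ((z / 2) ^ S p * bessel_series (S p) ((z / 2) ^ 2))
          = 2 * (z / 2) ^ S p * (INR (S p) * bessel_series (S p) ((z / 2) ^ 2)) by ring.
  rewrite -bessel_series_rec /=; field.
Qed.

Lemma besselJnat_at_0 m : besselJnat m 0 = bessel_coef m 0 * 0 ^ m.
Proof.
  rewrite besselJnat_series /bessel_series (_ : 0 / 2 = 0); last by field.
  rewrite (_ : 0 ^ 2 = 0) ?PSeries_0; ring.
Qed.

Lemma besselJnat_0_0 : besselJnat 0 0 = 1.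
Proof. by rewrite besselJnat_at_0 /bessel_coef /=; field. Qed.

Lemma besselJnat_S_0 m : besselJnat (S m) 0 = 0.
Proof. by rewrite besselJnat_at_0 /=; ring. Qed.

Lemma Rabs_bessel_series_le m y B :
  Rabs y <= B -> Rabs (bessel_series m y) <= exp B / INR (fact m).
Proof.
  move=> Hy; set b := fun j => B ^ j / INR (fact j) / INR (fact m).
  have Hb : ex_series b by apply: ex_series_scal_r; eexists; apply: is_series_exp.
  have Hterm j : Rabs (bessel_coef m j * y ^ j) <= b j.
  { have Hj := INR_fact_lt_0 j; have Hjm := INR_fact_lt_0 (j + m); have Hm := INR_fact_lt_0 m.
    have -> : Rabs (bessel_coef m j * y ^ j) = Rabs y ^ j / INR (fact j) / INR (fact (j + m)).
    { rewrite /bessel_coef Rabs_mult Rabs_div ?pow_1_abs -?RPow_abs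
        ?(Rabs_right (INR (fact j) * INR (fact (j + m)))); try nra.
      field; lra. }
    apply: Rmult_le_compat.
    - apply/Rdiv_le_0_compat => //; exact/pow_le/Rabs_pos.
    - exact/Rlt_le/Rinv_0_lt_compat.
    - apply: Rmult_le_compat_r; first exact/Rlt_le/Rinv_0_lt_compat.
      by apply: pow_incr; split; [apply: Rabs_pos|].
    - by apply/Rinv_le_contravar/le_INR/fact_le => //; lia. }
  rewrite /bessel_series /PSeries.
  apply: Rle_trans (Series_Rabs _ _) _.
  { apply: (@ex_series_le R_AbsRing R_CompleteNormedModule) Hb => n.
    by rewrite /norm /= /abs /= Rabs_Rabsolu. }
  apply: Rle_trans (Series_le _ _ (fun n => conj (Rabs_pos _) (Hterm n)) Hb) _.
  by rewrite /b Series_scal_r (is_series_unique _ _ (is_series_exp B)); right.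
Qed.

Lemma Rabs_besselJnat_le m z A :
  Rabs z <= A -> Rabs (besselJnat m z) <= exp A * exp (A ^ 2).
Proof.
  move=> Hz; rewrite besselJnat_series Rabs_mult -RPow_abs.
  have Hw : Rabs (z / 2) <= A by rewrite Rabs_div ?(Rabs_right 2); have := Rabs_pos z; lra.
  have Hw0 := Rabs_pos (z / 2).
  have Hy : Rabs ((z / 2) ^ 2) <= A ^ 2 by rewrite -RPow_abs; apply: pow_incr.
  have Hbs := Rabs_bessel_series_le m _ _ Hy.
  have Hpow := pow_div_fact_le_exp A m (Rle_trans _ _ _ Hw0 Hw).
  have Hpw : Rabs (z / 2) ^ m <= A ^ m by apply: pow_incr.
  have Hm := INR_fact_lt_0 m; have He := exp_pos (A ^ 2).
  apply: (Rle_trans _ (Rabs (z / 2) ^ m * (exp (A ^ 2) / INR (fact m)))).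
  { by apply: Rmult_le_compat_l; first exact: pow_le. }
  have -> : Rabs (z / 2) ^ m * (exp (A ^ 2) / INR (fact m))
          = Rabs (z / 2) ^ m / INR (fact m) * exp (A ^ 2) by field; lra.
  apply: Rmult_le_compat_r; first lra.
  apply: Rle_trans Hpow; apply: Rmult_le_compat_r => //; exact/Rlt_le/Rinv_0_lt_compat.
Qed.

Lemma besselJ_of_nat m z : besselJ (Z.of_nat m) z = besselJnat m z.
Proof. by rewrite /besselJ; case: Z_le_dec => ?; [rewrite Nat2Z.id | lia]. Qed.

Lemma besselJ_opp_nat m z : besselJ (- Z.of_nat m) z = (-1) ^ m * besselJnat m z.
Proof.
  rewrite /besselJ; case: Z_le_dec => ?; last by rewrite Z.opp_involutive Nat2Z.id.
  have -> : m = 0%nat by lia.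
  by rewrite /=; ring.
Qed.

Lemma Rabs_besselJ_le k z A : Rabs z <= A -> Rabs (besselJ k z) <= exp A * exp (A ^ 2).
Proof.
  case: (Z_nat_or_neg k) => -[m ->]; first by rewrite besselJ_of_nat; apply: Rabs_besselJnat_le.
  rewrite besselJ_opp_nat Rabs_mult pow_1_abs Rmult_1_l; exact: Rabs_besselJnat_le.
Qed.

Lemma besselJ_0_0 : besselJ 0 0 = 1.
Proof. by rewrite (besselJ_of_nat 0) besselJnat_0_0. Qed.

Lemma besselJ_neq0_0 k : k <> 0%Z -> besselJ k 0 = 0.
Proof.
  case: (Z_nat_or_neg k) => [[[|m] ->] | [m ->]] Hk; first by case: Hk.
  - by rewrite besselJ_of_nat besselJnat_S_0.
  - by rewrite besselJ_opp_nat besselJnat_S_0 Rmult_0_r.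
Qed.

(* The three-term recurrence and the derivative rule are first checked on
   nonnegative orders; negative orders follow from [J_{-m} = (-1)^m J_m]. *)
Lemma besselJ_rec k z : z * (besselJ (k - 1) z + besselJ (k + 1) z) = 2 * IZR k * besselJ k z.
Proof.
  case: (Z_nat_or_neg k) => [[[|q] ->] | [q ->]].
  - rewrite (_ : (Z.of_nat 0 - 1)%Z = (- Z.of_nat 1)%Z) // besselJ_opp_nat.
    rewrite (_ : (Z.of_nat 0 + 1)%Z = Z.of_nat 1) // besselJ_of_nat /=; ring.
  - rewrite (_ : (Z.of_nat (S q) - 1)%Z = Z.of_nat q); last by lia.
    rewrite (_ : (Z.of_nat (S q) + 1)%Z = Z.of_nat (S (S q))); last by lia.
    by rewrite !besselJ_of_nat besselJnat_rec -INR_IZR_INZ.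
  - rewrite (_ : (- Z.of_nat (S q) - 1)%Z = (- Z.of_nat (S (S q)))%Z); last by lia.
    rewrite (_ : (- Z.of_nat (S q) + 1)%Z = (- Z.of_nat q)%Z); last by lia.
    rewrite !besselJ_opp_nat opp_IZR -INR_IZR_INZ -!tech_pow_Rmult.
    transitivity ((-1) ^ q * (z * (besselJnat q z + besselJnat (S (S q)) z))); first ring.
    rewrite besselJnat_rec; ring.
Qed.

Lemma is_derive_besselJ k (z : R) :
  is_derive (besselJ k) z ((besselJ (k - 1) z - besselJ (k + 1) z) / 2).
Proof.
  case: (Z_nat_or_neg k) => [[[|q] ->] | [q ->]].
  - rewrite (_ : (Z.of_nat 0 - 1)%Z = (- Z.of_nat 1)%Z) // (_ : (Z.of_nat 0 + 1)%Z = Z.of_nat 1) //.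
    rewrite besselJ_opp_nat besselJ_of_nat.
    apply: (is_derive_ext (besselJnat 0)) => [s|]; first by rewrite besselJ_of_nat.
    by apply: (is_derive_eq _ _ _ _ (is_derive_besselJnat_0 z)) => /=; field.
  - rewrite (_ : (Z.of_nat (S q) - 1)%Z = Z.of_nat q); last by lia.
    rewrite (_ : (Z.of_nat (S q) + 1)%Z = Z.of_nat (S (S q))); last by lia.
    rewrite !besselJ_of_nat.
    apply: (is_derive_ext (besselJnat (S q))) => [s|]; first by rewrite besselJ_of_nat.
    exact: is_derive_besselJnat_S.
  - rewrite (_ : (- Z.of_nat (S q) - 1)%Z = (- Z.of_nat (S (S q)))%Z); last by lia.
    rewrite (_ : (- Z.of_nat (S q) + 1)%Z = (- Z.of_nat q)%Z); last by lia.
    rewrite !besselJ_opp_nat.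
    apply: (is_derive_ext (fun s => (-1) ^ S q * besselJnat (S q) s)) => [s|].
    { by rewrite besselJ_opp_nat. }
    apply: (is_derive_eq _ _ _ _ (is_derive_scal _ _ _ _ (is_derive_besselJnat_S q z))).
    rewrite -!tech_pow_Rmult /=; field.
Qed.

Definition is_derive_C (f : R -> C) (t : R) (d : C) : Prop :=
  is_derive (fun s => fst (f s)) t (fst d) /\ is_derive (fun s => snd (f s)) t (snd d).

Lemma is_derive_C_eq f t d d' : is_derive_C f t d -> d = d' -> is_derive_C f t d'.
Proof. by move=> H <-. Qed.

Lemma is_derive_C_minus f g t a b :
  is_derive_C f t a -> is_derive_C g t b -> is_derive_C (fun s => Cminus (f s) (g s)) t (Cminus a b).
Proof. by move=> [Hf1 Hf2] [Hg1 Hg2]; split; apply: is_derive_minus. Qed.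

Lemma is_derive_C_mult f g t a b :
  is_derive_C f t a -> is_derive_C g t b ->
  is_derive_C (fun s => Cmult (f s) (g s)) t (Cplus (Cmult a (g t)) (Cmult (f t) b)).
Proof.
  move=> [Hf1 Hf2] [Hg1 Hg2]; split.
  - apply: (is_derive_eq _ _ _ _ (is_derive_minus _ _ t _ _
      (is_derive_mult _ _ t _ _ Hf1 Hg1 Rmult_comm) (is_derive_mult _ _ t _ _ Hf2 Hg2 Rmult_comm))).
    rewrite /minus /plus /opp /mult /=; ring.
  - apply: (is_derive_eq _ _ _ _ (is_derive_plus _ _ t _ _
      (is_derive_mult _ _ t _ _ Hf1 Hg2 Rmult_comm) (is_derive_mult _ _ t _ _ Hf2 Hg1 Rmult_comm))).
    rewrite /plus /mult /=; ring.
Qed.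

Lemma is_derive_C_RtoC (f : R -> R) t d : is_derive f t d -> is_derive_C (fun s => RtoC (f s)) t (RtoC d).
Proof. by move=> Hf; split => //=; apply: is_derive_const. Qed.

Lemma Cmod_le_of_components (z : C) B :
  Rabs (fst z) <= B -> Rabs (snd z) <= B -> Cmod z <= 2 * B.
Proof.
  move=> H1 H2; have H1' := Rabs_pos (fst z); have H2' := Rabs_pos (snd z).
  rewrite /Cmod -(sqrt_pow2 (2 * B)); last lra.
  apply: sqrt_le_1_alt; rewrite -(pow2_abs (fst z)) -(pow2_abs (snd z)); nra.
Qed.

Lemma Cmod_le_of_is_derive_C_le_pow (e e' : R -> C) K k :
  (forall s, is_derive_C e s (e' s)) -> e 0 = 0 -> (forall s, Cmod (e' s) <= K * Rabs s ^ k) ->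
  forall t, Cmod (e t) <= 2 * (K * Rabs t ^ S k / INR (S k)).
Proof.
  move=> He He0 Hb t; apply: Cmod_le_of_components.
  - apply: (Rabs_le_of_is_derive_le_pow (fun s => fst (e s)) (fun s => fst (e' s))).
    + exact: (fun s => proj1 (He s)).
    + by rewrite He0.
    + move=> s; apply: Rle_trans (Hb s); apply: Rle_trans (Rmax_Cmod _); exact: Rmax_l.
  - apply: (Rabs_le_of_is_derive_le_pow (fun s => snd (e s)) (fun s => snd (e' s))).
    + exact: (fun s => proj2 (He s)).
    + by rewrite He0.
    + move=> s; apply: Rle_trans (Hb s); apply: Rle_trans (Rmax_Cmod _); exact: Rmax_r.
Qed.

Lemma Cmod_expmi theta : Cmod (expmi theta) = 1.
Proof.
  rewrite /Cmod /expmi /= -[RHS]sqrt_1; f_equal.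
  have := sin2_cos2 theta; rewrite /Rsqr; lra.
Qed.

Lemma expmi_add a b : expmi (a + b) = Cmult (expmi a) (expmi b).
Proof. by rewrite /expmi cos_plus sin_plus; apply: injective_projections => /=; ring. Qed.

Lemma is_derive_C_expmi (theta : R -> R) (t d : R) :
  is_derive theta t d -> is_derive_C (fun s => expmi (theta s)) t (Cmult (0, - d) (expmi (theta t))).
Proof.
  move=> Ht; have Hd : Derive (fun s => theta s) t = d by exact: is_derive_unique.
  by rewrite /is_derive_C /expmi /=; split; auto_derive; try (exists d); rewrite ?Hd //; ring.
Qed.

Lemma expmi_shift_phase t : expmi ((t - PI) / 2) = (sin (t / 2), cos (t / 2)).
Proof.
  have -> : (t - PI) / 2 = - (PI / 2 - t / 2) by field.
  by rewrite /expmi cos_neg sin_neg cos_shift sin_shift Ropp_involutive.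
Qed.

Lemma expmi_neg_shift_phase t : expmi (- ((t - PI) / 2)) = (sin (t / 2), - cos (t / 2)).
Proof.
  have -> : - ((t - PI) / 2) = PI / 2 - t / 2 by field.
  by rewrite /expmi cos_shift sin_shift.
Qed.

(** * Uniqueness for the lattice Schrödinger equation *)

Definition minus_i_K0 (alpha gamma : R) (f : seqZ) : seqZ :=
  sscal (Cmult Ci (RtoC (-1))) (K0 alpha gamma f).

Definition solves_K0 (alpha gamma : R) (u : Z -> R -> C) : Prop :=
  forall x t, is_derive_C (u x) t (minus_i_K0 alpha gamma (fun y => u y t) x).

Lemma solves_K0_minus alpha gamma u v :
  solves_K0 alpha gamma u -> solves_K0 alpha gamma v ->
  solves_K0 alpha gamma (fun x t => Cminus (u x t) (v x t)).
Proof.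
  move=> Hu Hv x t; apply: (is_derive_C_eq _ _ _ _ (is_derive_C_minus _ _ t _ _ (Hu x t) (Hv x t))).
  by rewrite /minus_i_K0 /K0 /sscal; apply: injective_projections => /=; ring.
Qed.

Section BoundedSolution.

Variables (alpha gamma B : R) (w : Z -> R -> C).
Hypothesis w_solves : solves_K0 alpha gamma w.
Hypothesis w_0 : forall x, w x 0 = 0.
Hypothesis w_bounded : forall x t, Cmod (w x t) <= B.

(* The factor [e^{i gamma x s}] removes the diagonal term [gamma x] of [K0],
   leaving only the nearest-neighbour coupling. *)
Lemma is_derive_C_gauged x s :
  is_derive_C (fun s => Cmult (expmi (- (gamma * IZR x * s))) (w x s)) s
    (Cmult (expmi (- (gamma * IZR x * s))) (Cmult (0, - alpha) (Cplus (w (x - 1)%Z s) (w (x + 1)%Z s)))).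
Proof.
  have Hphase : is_derive (fun s => - (gamma * IZR x * s)) s (- (gamma * IZR x)) by auto_derive => //; ring.
  apply: (is_derive_C_eq _ _ _ _ (is_derive_C_mult _ _ s _ _ (is_derive_C_expmi _ _ _ Hphase) (w_solves x s))).
  by rewrite /minus_i_K0 /K0 /sscal; apply: injective_projections => /=; ring.
Qed.

Lemma Cmod_solution_le_pow_div_fact k x t :
  Cmod (w x t) <= B * ((4 * Rabs alpha * Rabs t) ^ k / INR (fact k)).
Proof.
  elim: k x t => [|k IH] x t; first by rewrite /= Rdiv_1_r Rmult_1_r.
  have Ha := Rabs_pos alpha; have Hk := INR_fact_lt_0 k; have HSk : 0 < INR (S k) by apply: lt_0_INR; lia.
  set K := 2 * Rabs alpha * (B * ((4 * Rabs alpha) ^ k / INR (fact k))).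
  have Hbound s : Cmod (Cmult (expmi (- (gamma * IZR x * s)))
                   (Cmult (0, - alpha) (Cplus (w (x - 1)%Z s) (w (x + 1)%Z s)))) <= K * Rabs s ^ k.
  { have Hcoupling : Cmod (0, - alpha) = Rabs alpha.
    { by rewrite /Cmod /= -sqrt_Rsqr_abs /Rsqr; f_equal; ring. }
    rewrite !Cmod_mult Cmod_expmi Hcoupling Rmult_1_l /K.
    have := Cmod_triangle (w (x - 1)%Z s) (w (x + 1)%Z s).
    have := IH (x - 1)%Z s; have := IH (x + 1)%Z s.
    rewrite Rpow_mult_distr => H1 H2 H3.
    have -> : 2 * Rabs alpha * (B * ((4 * Rabs alpha) ^ k / INR (fact k))) * Rabs s ^ k
            = Rabs alpha * (2 * (B * ((4 * Rabs alpha) ^ k * Rabs s ^ k / INR (fact k)))) by field; lra.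
    apply: Rmult_le_compat_l => //; lra. }
  have He0 : Cmult (expmi (- (gamma * IZR x * 0))) (w x 0) = 0.
  { by rewrite w_0; apply: injective_projections => /=; ring. }
  have := Cmod_le_of_is_derive_C_le_pow _ _ K k (is_derive_C_gauged x) He0 Hbound t.
  rewrite Cmod_mult Cmod_expmi Rmult_1_l.
  move=> H; apply: Rle_trans H _; apply: Req_le.
  rewrite /K fact_simpl mult_INR -!tech_pow_Rmult !Rpow_mult_distr; field; lra.
Qed.

Lemma bounded_solution_eq0 x t : w x t = 0.
Proof.
  apply: Cmod_eq_0; apply: Rle_antisym; last exact: Cmod_ge_0.
  apply: (le_0_of_le_pow_div_fact _ B (4 * Rabs alpha * Rabs t)) => k.
  exact: Cmod_solution_le_pow_div_fact.
Qed.

End BoundedSolution.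

Lemma solves_K0_unique alpha gamma u v M :
  solves_K0 alpha gamma u -> solves_K0 alpha gamma v -> (forall x, u x 0 = v x 0) ->
  (forall x t, Cmod (u x t) <= M) -> (forall x t, Cmod (v x t) <= M) ->
  forall x t, u x t = v x t.
Proof.
  move=> Hu Hv H0 Bu Bv x t; apply/Ceq_minus.
  apply: (bounded_solution_eq0 alpha gamma (2 * M) _ (solves_K0_minus _ _ _ _ Hu Hv)) => [y | y s].
  - by rewrite H0; ring.
  - by apply: Rle_trans (Cmod_triangle _ _) _; rewrite Cmod_opp; have := Bu y s; have := Bv y s; lra.
Qed.

(** * The Bessel wave *)

Definition bessel_wave (alpha gamma : R) (n x : Z) (t : R) : C :=
  Cmult (RtoC (besselJ (n - x)%Z (4 * alpha / gamma * sin (gamma * t / 2))))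
        (expmi ((gamma * t - PI) / 2 * IZR x + (gamma * t + PI) / 2 * IZR n)).

Lemma bessel_wave_solves alpha gamma n :
  gamma <> 0 -> solves_K0 alpha gamma (bessel_wave alpha gamma n).
Proof.
  move=> Hgamma x t.
  have Hz : is_derive (fun s => 4 * alpha / gamma * sin (gamma * s / 2)) t (2 * alpha * cos (gamma * t / 2)).
  { by auto_derive => //; rewrite /Rdiv; field. }
  have HP : is_derive (fun s => (gamma * s - PI) / 2 * IZR x + (gamma * s + PI) / 2 * IZR n) t
              (gamma / 2 * IZR x + gamma / 2 * IZR n).
  { by auto_derive => //; field. }
  apply: (is_derive_C_eq _ _ _ _ (is_derive_C_mult _ _ t _ _
     (is_derive_C_RtoC _ _ _ (is_derive_comp (besselJ (n - x)) _ t _ _ (is_derive_besselJ _ _) Hz))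
     (is_derive_C_expmi _ _ _ HP))).
  set z := 4 * alpha / gamma * sin (gamma * t / 2).
  set E := expmi _.
  set J := besselJ (n - x) z; set Jm := besselJ (n - x - 1) z; set Jp := besselJ (n - x + 1) z.
  have Hleft : bessel_wave alpha gamma n (x - 1) t = Cmult (RtoC Jp) (Cmult E (expmi (- ((gamma * t - PI) / 2)))).
  { rewrite /bessel_wave -expmi_add (_ : (n - (x - 1))%Z = (n - x + 1)%Z); last by lia.
    by rewrite minus_IZR; congr (Cmult _ (expmi _)); field. }
  have Hright : bessel_wave alpha gamma n (x + 1) t = Cmult (RtoC Jm) (Cmult E (expmi ((gamma * t - PI) / 2))).
  { rewrite /bessel_wave -expmi_add (_ : (n - (x + 1))%Z = (n - x - 1)%Z); last by lia.
    by rewrite plus_IZR; congr (Cmult _ (expmi _)); field. }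
  have Hcentre : bessel_wave alpha gamma n x t = Cmult (RtoC J) E by [].
  have Hrec : alpha * sin (gamma * t / 2) * (Jm + Jp) - gamma / 2 * IZR (n - x) * J = 0.
  { have -> : alpha * sin (gamma * t / 2) * (Jm + Jp) = gamma / 4 * (z * (Jm + Jp)) by rewrite /z; field.
    rewrite besselJ_rec -/J; field. }
  rewrite /minus_i_K0 /sscal /K0 Hleft Hright Hcentre expmi_shift_phase expmi_neg_shift_phase.
  apply/Ceq_minus.
  transitivity (Cmult (Cmult Ci E) (RtoC (alpha * sin (gamma * t / 2) * (Jm + Jp) - gamma / 2 * IZR (n - x) * J))).
  - rewrite minus_IZR /scal /= /mult /=; apply: injective_projections => /=; field.
  - by rewrite Hrec; ring.
Qed.

Lemma bessel_wave_0 alpha gamma n x : bessel_wave alpha gamma n x 0 = delta n x.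
Proof.
  rewrite /bessel_wave /delta Rmult_0_r (_ : 0 / 2 = 0); last by field.
  rewrite sin_0 Rmult_0_r; case: Z.eq_dec => [-> | Hx].
  - rewrite Z.sub_diag besselJ_0_0 (_ : _ + _ = 0); last by field.
    by rewrite /expmi cos_0 sin_0; apply: injective_projections => /=; ring.
  - rewrite besselJ_neq0_0; last by lia.
    by apply: injective_projections => /=; ring.
Qed.

Lemma Cmod_bessel_wave_le alpha gamma n x t :
  Cmod (bessel_wave alpha gamma n x t)
  <= exp (Rabs (4 * alpha / gamma)) * exp (Rabs (4 * alpha / gamma) ^ 2).
Proof.
  rewrite /bessel_wave Cmod_mult Cmod_R Cmod_expmi Rmult_1_r.
  apply: Rabs_besselJ_le; rewrite Rabs_mult.
  have := Rabs_pos (4 * alpha / gamma); have : Rabs (sin (gamma * t / 2)) <= 1.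
  { by apply/Rabs_le/SIN_bound. }
  nra.
Qed.

(** * The unitary group generated by K0 *)

Lemma l2_lin_comb a b f g : l2 f -> l2 g -> l2 (sadd (sscal a f) (sscal b g)).
Proof.
  move=> [Hf1 Hf2] [Hg1 Hg2].
  have Hterm m : Rabs (Cmod (sadd (sscal a f) (sscal b g) m) ^ 2)
                 <= 2 * Cmod a ^ 2 * Cmod (f m) ^ 2 + 2 * Cmod b ^ 2 * Cmod (g m) ^ 2.
  { rewrite Rabs_right; last exact/Rle_ge/pow2_ge_0.
    have := Cmod_triangle (Cmult a (f m)) (Cmult b (g m)); rewrite !Cmod_mult => Htri.
    apply: Rle_trans (pow_incr _ _ 2 (conj (Cmod_ge_0 _) Htri)) _.
    have := pow2_ge_0 (Cmod a * Cmod (f m) - Cmod b * Cmod (g m)); nra. }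
  split; (apply: (@ex_series_le R_AbsRing R_CompleteNormedModule); first by move=> k; apply: Hterm);
    by apply: ex_series_plus; apply: ex_series_scal_l.
Qed.

Lemma l2_of_finite_support (f : seqZ) (N : nat) :
  (forall m, (Z.of_nat N < Z.abs m)%Z -> f m = RtoC 0) -> l2 f.
Proof.
  move=> Hf.
  have Hzero : ex_series (fun _ : nat => 0).
  { apply: (ex_series_ext (fun k => 0 * (/ 2) ^ k)) => [k|]; first exact: Rmult_0_l.
    by apply/ex_series_scal_l/ex_series_geom; rewrite Rabs_right; lra. }
  split; apply/(ex_series_incr_n _ (S N)); apply: ex_series_ext Hzero => k;
    rewrite Hf ?Cmod_0 /=; try ring; lia.
Qed.

Lemma Cmod_le_l2norm f x : l2 f -> Cmod (f x) <= l2norm f.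
Proof.
  move=> [H1 H2]; rewrite /l2norm /sumZ -(sqrt_pow2 (Cmod (f x))); last exact: Cmod_ge_0.
  apply: sqrt_le_1_alt.
  have P1 := Series_nonneg _ (fun _ => pow2_ge_0 _) H1.
  have P2 := Series_nonneg _ (fun _ => pow2_ge_0 _) H2.
  case: (Z_nat_or_neg x) => -[k ->].
  - have := Series_ge_term _ k (fun _ => pow2_ge_0 _) H1; lra.
  - have := Series_ge_term _ k (fun _ => pow2_ge_0 _) H2; lra.
Qed.

Lemma l2_delta n : l2 (delta n).
Proof.
  apply: (l2_of_finite_support _ (Z.to_nat (Z.abs n))) => m Hm.
  by rewrite /delta; case: Z.eq_dec => // ?; lia.
Qed.

Lemma domK0_delta n : domK0 (delta n).
Proof.
  split; first exact: l2_delta.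
  apply: (l2_of_finite_support _ (Z.to_nat (Z.abs n))) => m Hm.
  rewrite /delta; case: Z.eq_dec => ?; first lia.
  by apply: injective_projections => /=; ring.
Qed.

Lemma l2_minus_i_K0_delta alpha gamma n : l2 (minus_i_K0 alpha gamma (delta n)).
Proof.
  apply: (l2_of_finite_support _ (S (Z.to_nat (Z.abs n)))) => m Hm.
  rewrite /minus_i_K0 /sscal /K0 /delta.
  do 3 (case: Z.eq_dec => ?; first lia).
  by apply: injective_projections => /=; ring.
Qed.

Lemma ssub_lin_comb f g : ssub f g = sadd (sscal (RtoC 1) f) (sscal (RtoC (-1)) g).
Proof.
  by apply: functional_extensionality => m; apply: injective_projections => /=; ring.
Qed.

Lemma sscal_lin_comb c f : sscal c f = sadd (sscal c f) (sscal (RtoC 0) f).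
Proof.
  by apply: functional_extensionality => m; apply: injective_projections => /=; ring.
Qed.

Lemma l2_ssub f g : l2 f -> l2 g -> l2 (ssub f g).
Proof. by move=> Hf Hg; rewrite ssub_lin_comb; apply: l2_lin_comb. Qed.

Lemma l2_sscal c f : l2 f -> l2 (sscal c f).
Proof. by move=> Hf; rewrite sscal_lin_comb; apply: l2_lin_comb. Qed.

Lemma is_derive_C_of_l2_quotient (F : R -> seqZ) t (g : seqZ) x :
  (forall h, l2 (ssub (sscal (RtoC (/ h)) (ssub (F (t + h)) (F t))) g)) ->
  is_lim (fun h => l2norm (ssub (sscal (RtoC (/ h)) (ssub (F (t + h)) (F t))) g)) 0 0 ->
  is_derive_C (fun s => F s x) t (g x).
Proof.
  move=> Hl2 Hlim.
  set Q := fun h => ssub (sscal (RtoC (/ h)) (ssub (F (t + h)) (F t))) g.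
  have HQ h : Cmod (Q h x) <= l2norm (Q h) := Cmod_le_l2norm _ x (Hl2 h).
  split; apply: (is_derive_of_quotient_le _ _ _ (fun h => l2norm (Q h)) Hlim) => h Hh;
    apply: Rle_trans (HQ h); apply: Rle_trans (Rmax_Cmod _);
    [apply: Rle_trans (Rmax_l _ _) | apply: Rle_trans (Rmax_r _ _)];
    by apply: Req_le; congr Rabs; rewrite /Q /ssub /sscal /=; field.
Qed.

Section UnitaryGroup.

Variables (alpha gamma : R) (U : R -> seqZ -> seqZ).
Hypothesis U_unitary : unitary_group U.
Hypothesis U_generated : generated_by_K0 alpha gamma U.

Lemma unitary_group_l2 t f : l2 f -> l2 (U t f).
Proof. exact: (proj1 U_unitary). Qed.

Lemma unitary_group_ssub t f g : l2 f -> l2 g -> U t (ssub f g) = ssub (U t f) (U t g).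
Proof. by move=> Hf Hg; rewrite !ssub_lin_comb (proj1 (proj2 U_unitary)). Qed.

Lemma unitary_group_sscal t c f : l2 f -> U t (sscal c f) = sscal c (U t f).
Proof. by move=> Hf; rewrite sscal_lin_comb (proj1 (proj2 U_unitary)) // -sscal_lin_comb. Qed.

Lemma unitary_group_isometry t f : l2 f -> l2norm (U t f) = l2norm f.
Proof. exact: (proj1 (proj2 (proj2 U_unitary))). Qed.

Lemma unitary_group_0 f : l2 f -> U 0 f = f.
Proof. exact: (proj1 (proj2 (proj2 (proj2 (proj2 U_unitary))))). Qed.

Lemma unitary_group_add s t f : l2 f -> U (s + t) f = U s (U t f).
Proof. exact: (proj1 (proj2 (proj2 (proj2 (proj2 (proj2 U_unitary)))))). Qed.

Lemma unitary_group_comm s t f : l2 f -> U s (U t f) = U t (U s f).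
Proof. by move=> Hf; rewrite -!unitary_group_add // Rplus_comm. Qed.

Lemma unitary_group_quotient t h f g : l2 f -> l2 g ->
  ssub (sscal (RtoC (/ h)) (ssub (U h (U t f)) (U t f))) (U t g)
  = U t (ssub (sscal (RtoC (/ h)) (ssub (U h f) f)) g).
Proof.
  move=> Hf Hg.
  rewrite unitary_group_comm // unitary_group_ssub ?unitary_group_sscal ?unitary_group_ssub //;
    by repeat first [assumption | apply: unitary_group_l2 | apply: l2_ssub | apply: l2_sscal].
Qed.

Lemma unitary_group_quotient_lim t f g : l2 f -> l2 g ->
  is_lim (fun h => l2norm (ssub (sscal (RtoC (/ h)) (ssub (U h f) f)) g)) 0 0 ->
  is_lim (fun h => l2norm (ssub (sscal (RtoC (/ h)) (ssub (U h (U t f)) (U t f))) (U t g))) 0 0.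
Proof.
  move=> Hf Hg; apply: is_lim_ext => h.
  rewrite unitary_group_quotient // unitary_group_isometry //.
  by repeat first [assumption | apply: unitary_group_l2 | apply: l2_ssub | apply: l2_sscal].
Qed.

Lemma unitary_orbit_quotient_lim f t :
  l2 f -> domK0 f -> l2 (minus_i_K0 alpha gamma f) ->
  is_lim (fun h => l2norm (ssub (sscal (RtoC (/ h)) (ssub (U h (U t f)) (U t f)))
                                (U t (minus_i_K0 alpha gamma f)))) 0 0.
Proof.
  move=> Hf Hdom Hg; apply: unitary_group_quotient_lim => //.
  exact: (proj2 (U_generated f _ Hf Hg) (conj Hdom eq_refl)).
Qed.

Lemma minus_i_K0_unitary_group f t :
  l2 f -> domK0 f -> l2 (minus_i_K0 alpha gamma f) ->
  U t (minus_i_K0 alpha gamma f) = minus_i_K0 alpha gamma (U t f).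
Proof.
  move=> Hf Hdom Hg.
  have := unitary_orbit_quotient_lim f t Hf Hdom Hg.
  by move/(U_generated _ _ (unitary_group_l2 t _ Hf) (unitary_group_l2 t _ Hg)) => [].
Qed.

Lemma solves_K0_unitary_orbit f :
  l2 f -> domK0 f -> l2 (minus_i_K0 alpha gamma f) -> solves_K0 alpha gamma (fun x s => U s f x).
Proof.
  move=> Hf Hdom Hg x t.
  rewrite -minus_i_K0_unitary_group //.
  have Hlim := unitary_orbit_quotient_lim f t Hf Hdom Hg.
  have HUt h : U (t + h) f = U h (U t f) by rewrite Rplus_comm unitary_group_add.
  apply: (is_derive_C_of_l2_quotient (fun s => U s f)) => [h|].
  - rewrite HUt unitary_group_quotient //.
    by repeat first [assumption | apply: unitary_group_l2 | apply: l2_ssub | apply: l2_sscal].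
  - by apply: is_lim_ext Hlim => h; rewrite HUt.
Qed.

End UnitaryGroup.

Theorem mainTheorem4 (alpha gamma : R) (hgamma : gamma <> 0)
  (U : R -> seqZ -> seqZ)
  (hU : unitary_group U) (hgen : generated_by_K0 alpha gamma U) :
  forall (t : R) (x n : Z),
    U t (delta n) x =
    Cmult (RtoC (besselJ (n - x)%Z (4 * alpha / gamma * sin (gamma * t / 2))))
          (expmi ((gamma * t - PI) / 2 * IZR x + (gamma * t + PI) / 2 * IZR n)).
Proof.
  move=> t x n; change (U t (delta n) x = bessel_wave alpha gamma n x t).
  set A := Rabs (4 * alpha / gamma).
  have HB := Rmult_le_pos _ _ (Rlt_le _ _ (exp_pos A)) (Rlt_le _ _ (exp_pos (A ^ 2))).
  have Hnorm : 0 <= l2norm (delta n) by apply: sqrt_pos.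
  apply: (solves_K0_unique alpha gamma (fun y s => U s (delta n) y) _ (l2norm (delta n) + exp A * exp (A ^ 2))).
  - exact: solves_K0_unitary_orbit hU hgen _ (l2_delta n) (domK0_delta n) (l2_minus_i_K0_delta _ _ n).
  - exact: bessel_wave_solves.
  - by move=> y; rewrite bessel_wave_0 unitary_group_0 //; exact: l2_delta.
  - move=> y s; have := Cmod_le_l2norm _ y (unitary_group_l2 _ hU s _ (l2_delta n)).
    rewrite (unitary_group_isometry _ hU s _ (l2_delta n)); lra.
  - by move=> y s; have := Cmod_bessel_wave_le alpha gamma n y s; rewrite -/A; lra.
Qed.
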